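(* Let $h\in\mathbb{Z}[t]$ be a monic polynomial of degree $k$ with coefficients in $\{0,1\}$ whose reduction mod $2$ is irreducible over $GF(2)$, so that $GF(2^k)$ is identified with the set of polynomials of degree $<k$ with coefficients in $\{0,1\}$, with arithmetic modulo $2$ and $h$; identify its additive group with $G=\mathbb{Z}_2^k$ via coefficient vectors, and let $\tilde G=\mathbb{R}_2^k$. For $x\in G$, regarded as an integer polynomial, let $\rho(x)\in\mathbb{Z}[t]$ be the remainder of $x^2$ upon division by $h$ in $\mathbb{Z}[t]$ (degree $<k$), and define $f(x)\in\tilde G$ as the coefficient vector of $\rho(x)/2$ with each coefficient taken modulo $2$. Then for all $g_1,g_2,g_3,g_4\in G$ with $g_1+g_2=g_3+g_4$ (in $G$) and $\{g_1,g_2\}\neq\{g_3,g_4\}$, the element $f(g_1)+f(g_2)-f(g_3)-f(g_4)\in\tilde G$ has all coordinates integers (mod $2$) and is nonzero, i.e. lies in $G\setminus\{0\}$.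
   Context: $\mathbb{R}_2$ denotes the additive group of reals modulo $2$, and $G=\mathbb{Z}_2^k\subset\tilde G=\mathbb{R}_2^k$. *)

From HB Require Import structures.
From mathcomp Require Import all_boot all_order all_algebra.
Set Implicit Arguments. Unset Strict Implicit. Unset Printing Implicit Defensive.
Import Order.TTheory GRing.Theory Num.Theory.
Local Open Scope ring_scope.

Definition liftZ (k : nat) (g : 'rV['F_2]_k) : {poly int} :=
  \sum_(j < k) ((val (g 0 j))%:Z) *: 'X^j.

(* rho(x) = remainder of x^2 upon division by h in Z[t] (h monic, so %% is
   the genuine Euclidean remainder). *)
Definition rho (h : {poly int}) (k : nat) (g : 'rV['F_2]_k) : {poly int} :=
  (liftZ g ^+ 2) %% h.

(* Real representative of the i-th coordinate of f(g): rho(g)_i / 2 (a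
   rational number, taken modulo 2). *)
Definition fQ (h : {poly int}) (k : nat) (g : 'rV['F_2]_k) (i : 'I_k) : rat :=
  ((rho h g)`_i)%:~R / 2.

Definition eqmod2 (x y : rat) : Prop := (x - y) / 2 \is a Num.int.

From HB Require Import structures.
From mathcomp Require Import all_boot all_order all_algebra.
From mathcomp Require Import ring.
Import Order.TTheory GRing.Theory Num.Theory.
Set Implicit Arguments. Unset Strict Implicit. Unset Printing Implicit Defensive.
Local Open Scope ring_scope.

(* Let x_i in Z[t] be the 0/1 lift of g_i and rho_i = x_i^2 mod h.
   1. Since g1 + g2 = g3 + g4, the reductions mod 2 of x1 + x2 and x3 + x4
      agree, so x1 + x2 - (x3 + x4) = 2e, and a ring identity gives
      x1^2 + x2^2 - x3^2 - x4^2 = 2S  with  S = 2e(e + x3 + x4) + x3x4 - x1x2.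
   2. The remainder by the monic h is Z-linear, hence
      rho1 + rho2 - rho3 - rho4 = 2 (S mod h): the i-th coordinate of
      f(g1) + f(g2) - f(g3) - f(g4) is the integer c_i, where c = S mod h.
   3. Reduction mod 2 commutes with the remainder by h, and S reduces to
      x3x4 - x1x2 = (x1 - x3)(x1 - x4) over GF(2).  If every c_i were even,
      the irreducible reduction of h, of degree k, would divide this product,
      hence one factor of degree < k, forcing g1 = g3 or g1 = g4, i.e.
      {g1, g2} = {g3, g4}. *)

Section IntPolyModPrime.
Variables (p : nat) (p_pr : prime p).

Lemma redp_eq0 (P : {poly int}) :
  map_poly (fun z : int => z%:~R : 'F_p) P = 0 -> exists Q, P = Q *+ p.
Proof.
move=> P0; exists (\poly_(i < size P) (P`_i %/ p)%Z); apply/polyP => i.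
rewrite coefMn coef_poly.
case: ltnP => [_|/(nth_default 0) ->]; last by rewrite mul0rn.
have : (p %| P`_i)%Z.
  by rewrite (dvdz_pcharf (pchar_Fp p_pr)) -coef_map P0 coef0.
by move/divzK; rewrite -mulr_natr natz => ->.
Qed.

Lemma redp_eq0_dvd k (P : {poly int}) :
  (size P <= k)%N -> (forall i : 'I_k, (p %| P`_i)%Z) ->
  map_poly (fun z : int => z%:~R : 'F_p) P = 0.
Proof.
move=> sP P_dvd; apply/polyP => i; rewrite coef_map coef0; apply/eqP.
rewrite -(dvdz_pcharf (pchar_Fp p_pr)); have [ik | ki] := ltnP i k.
  exact: (P_dvd (Ordinal ik)).
by rewrite nth_default ?dvdz0 // (leq_trans sP ki).
Qed.

Lemma redp_natmul (Q : {poly int}) :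
  map_poly (fun z : int => z%:~R : 'F_p) (Q *+ p) = 0.
Proof.
by rewrite raddfMn -mulr_natr -polyC_natr (GRing.pcharf0 (pchar_Fp p_pr)) mulr0.
Qed.

End IntPolyModPrime.

Section MonicRemainder.
Variables (R : idomainType) (d : {poly R}).
Hypothesis d_monic : d \is monic.

Let d_unit : lead_coef d \in GRing.unit.
Proof. by rewrite (monicP d_monic) unitr1. Qed.

Lemma modp_alt4 (p1 p2 p3 p4 : {poly R}) :
  (p1 + p2 - p3 - p4) %% d = p1 %% d + p2 %% d - p3 %% d - p4 %% d.
Proof.
by rewrite !(Pdiv.IdomainUnit.modpD d_unit, Pdiv.IdomainUnit.modpN d_unit).
Qed.

Lemma modp_natmul (p : {poly R}) n : (p *+ n) %% d = (p %% d) *+ n.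
Proof. by rewrite -!scaler_nat Pdiv.IdomainUnit.modpZl. Qed.

(* Ring morphisms commute with the remainder by a monic polynomial (used for
   the reduction Z -> GF(2), which is not a field morphism). *)
Lemma map_modp_monic (S : idomainType) (f : {rmorphism R -> S})
    (p : {poly R}) :
  map_poly f (p %% d) = map_poly f p %% map_poly f d.
Proof.
have fd_unit : lead_coef (map_poly f d) \in GRing.unit.
  by rewrite (monicP (monic_map f d_monic)) unitr1.
rewrite {2}(Pdiv.IdomainUnit.divp_eq d_unit p) rmorphD rmorphM /=.
rewrite Pdiv.IdomainUnit.modp_addl_mul_small //.
rewrite [size (map_poly f d)]size_map_poly_id0; last first.
  by rewrite (monicP d_monic) rmorph1 oner_neq0.
apply: (@leq_ltn_trans (size (p %% d))); last by rewrite ltn_modp monic_neq0.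
by apply/leq_sizeP => j /(nth_default 0) pj; rewrite coef_map /= pj rmorph0.
Qed.

End MonicRemainder.

Lemma sum_sq_even (R : comPzRingType) (x1 x2 x3 x4 e : R) :
  x1 + x2 - (x3 + x4) = e *+ 2 ->
  x1 ^+ 2 + x2 ^+ 2 - x3 ^+ 2 - x4 ^+ 2
    = ((e * (e + x3 + x4)) *+ 2 + (x3 * x4 - x1 * x2)) *+ 2.
Proof.
move=> E; have -> : x1 = e *+ 2 + (x3 + x4) - x2 by rewrite -E; ring.
ring.
Qed.

Lemma prod_diff (R : comPzRingType) (a b c d : R) :
  a + b = c + d -> c * d - a * b = (a - c) * (a - d).
Proof.
move=> E; have -> : b = c + d - a by rewrite -E; ring.
ring.
Qed.

Lemma irredp_dvdM (F : fieldType) (P a b : {poly F}) :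
  irreducible_poly P -> P %| a * b -> (P %| a) || (P %| b).
Proof.
move=> P_irr Pab; have [//|Pna] /= := boolP (P %| a).
by rewrite -(Gauss_dvdpr _ (_ : coprimep P a)) ?irreducible_poly_coprime.
Qed.

Lemma dvdp_rVpoly (F : fieldType) k (P : {poly F}) (u : 'rV[F]_k) :
  size P = k.+1 -> P %| rVpoly u -> u = 0.
Proof.
move=> sP Pu; apply: (can_inj rVpolyK); rewrite linear0; apply/eqP.
apply: contraTT Pu => u0; apply/negP => /(dvdp_leq u0).
by rewrite sP ltnNge size_poly.
Qed.

Lemma small_pair_prod_dvd (F : fieldType) k (P : {poly F})
    (g1 g2 g3 g4 : 'rV[F]_k) :
  irreducible_poly P -> size P = k.+1 -> g1 + g2 = g3 + g4 ->
  P %| rVpoly g3 * rVpoly g4 - rVpoly g1 * rVpoly g2 ->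
  (g1 == g3) || (g1 == g4).
Proof.
move=> P_irr sP sum_eq.
have sumP : rVpoly g1 + rVpoly g2 = rVpoly g3 + rVpoly g4.
  by rewrite -!raddfD sum_eq.
rewrite (prod_diff sumP) -!raddfB => /(irredp_dvdM P_irr) /orP [].
  by move=> /(dvdp_rVpoly sP) /eqP; rewrite subr_eq0 => ->.
by move=> /(dvdp_rVpoly sP) /eqP; rewrite subr_eq0 => ->; rewrite orbT.
Qed.

Lemma pair_set_eq (V : finZmodType) (g1 g2 g3 g4 : V) :
  g1 + g2 = g3 + g4 -> (g1 == g3) || (g1 == g4) -> [set g1; g2] = [set g3; g4].
Proof.
move=> sum_eq /orP [] /eqP g1E; move: sum_eq; rewrite g1E.
  by move=> /addrI ->.
by rewrite addrC => /addIr ->; rewrite setUC.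
Qed.

Local Notation red2 := (map_poly (fun z : int => z%:~R : 'F_2)).

Lemma red2_liftZ k (g : 'rV['F_2]_k) : red2 (liftZ g) = rVpoly g.
Proof.
rewrite /liftZ rmorph_sum /rVpoly poly_def; apply: eq_bigr => j _.
by rewrite -!mul_polyC rmorphM /= map_polyC map_polyXn valK /= -pmulrn natr_Zp.
Qed.

Lemma eqmod2_int0 (z : int) : eqmod2 z%:~R 0 <-> (2 %| z)%Z.
Proof.
rewrite /eqmod2 subr0; split.
  move=> /intrP [m zE]; apply/dvdzP; exists m.
  by apply: (@intr_inj rat); rewrite intrM -zE divfK.
by move=> /dvdzP [m ->]; rewrite intrM mulfK ?intr_int.
Qed.

Unset Implicit Arguments.

Theorem lemma13 (k : nat) (h : {poly int})
  (h_monic : h \is monic)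
  (h_size : size h = k.+1)
  (h_coef : forall i : nat, h`_i = 0 \/ h`_i = 1)
  (h_irr : irreducible_poly (map_poly (fun z : int => z%:~R : 'F_2) h))
  (g1 g2 g3 g4 : 'rV['F_2]_k)
  (hsum : g1 + g2 = g3 + g4)
  (hne : [set g1; g2] != [set g3; g4]) :
  let D := fun i : 'I_k => fQ h g1 i + fQ h g2 i - fQ h g3 i - fQ h g4 i in
  (forall i : 'I_k, exists n : int, eqmod2 (D i) n%:~R) /\
  (exists i : 'I_k, ~ eqmod2 (D i) 0).
Proof.
move=> D; have two_prime : prime 2 by [].
have [e He] : exists e, liftZ g1 + liftZ g2 - (liftZ g3 + liftZ g4) = e *+ 2.
  apply: (redp_eq0 two_prime).
  by rewrite !rmorphB !rmorphD /= !red2_liftZ -!raddfD hsum subrr.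
pose S := (e * (e + liftZ g3 + liftZ g4)) *+ 2
          + (liftZ g3 * liftZ g4 - liftZ g1 * liftZ g2).
set c := S %% h.
have rho_alt : rho h g1 + rho h g2 - rho h g3 - rho h g4 = c *+ 2.
  by rewrite /rho -modp_alt4 // (sum_sq_even He) modp_natmul.
have DE i : D i = (c`_i)%:~R.
  rewrite /D /fQ -mulrDl -!mulrBl -!(intrD, intrB) -coefD -!coefB rho_alt coefMn.
  by rewrite raddfMn /=; field.
split=> [i | ]; first by exists c`_i; rewrite /eqmod2 DE subrr mul0r rpred0.
(* Step 3: if all of them were even, h mod 2 would divide S mod 2. *)
have [i c_odd | c_even] := pickP [pred i : 'I_k | ~~ (2 %| c`_i)%Z].
  by exists i; rewrite DE eqmod2_int0; apply/negP.
have red2c : red2 c = 0.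
  apply: (redp_eq0_dvd two_prime) => [|i]; last by have /= /negbFE := c_even i.
  by rewrite -ltnS -h_size ltn_modp monic_neq0.
have red2S : red2 S = rVpoly g3 * rVpoly g4 - rVpoly g1 * rVpoly g2.
  rewrite /S rmorphD /= (redp_natmul two_prime) add0r rmorphB !rmorphM /=.
  by rewrite !red2_liftZ.
have red2h_size : size (red2 h) = k.+1.
  by rewrite size_map_poly_id0 // (monicP h_monic) rmorph1 oner_neq0.
move/negP: hne; case; apply/eqP/pair_set_eq => //.
apply: (small_pair_prod_dvd h_irr red2h_size hsum).
by apply/modp_eq0P; rewrite -red2S -map_modp_monic.
Qed.
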